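(* In a qubit stabilizer subsystem code, a region $R$ of physical qubits is bare-cleanable if and only if for every Pauli operator $P_L$ on the logical subsystem there exists a bare-CSP Pauli operator $P$ supported on $R^c$ that implements $P_L\otimes\mathrm{Id}_J$.
   Context: Stabilizer subsystem code: stabilizer group (abelian subgroup of the Pauli group not containing $-\mathrm{Id}$) with code space its common $+1$ eigenspace, isomorphic via an encoding isometry $V$ to an encoded space of encoded qubits, equipped with the tensor product structure and basis such that every codespace-preserving physical Pauli operator implements an encoded Pauli operator; the encoded qubits are divided into a logical subsystem $\mathcal{H}_L$ (at least one qubit) and a junk subsystem $\mathcal{H}_J$. $\Pi=VV^\dagger$. $A$ is CSP if $[A,\Pi]=0$; dressed-CSP if moreover $V^\dagger AV=A_L\otimes A_J$ (it implements $A_L\otimes A_J$); bare-CSP if also $A_J=\mathrm{Id}_J$. Supported on $R$: of the form $A_R\otimes\mathrm{Id}_{R^c}$. $R$ is bare-cleanable (correctable) if for every logical operator $A_L\in\mathcal{B}(\mathcal{H}_L)$ there is a bare-CSP operator supported on $R^c$ implementing $A_L\otimes\mathrm{Id}_J$. *)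

From HB Require Import structures.
From mathcomp Require Import all_boot all_order all_algebra.
Set Implicit Arguments. Unset Strict Implicit. Unset Printing Implicit Defensive.
Import Order.TTheory GRing.Theory Num.Theory.
Local Open Scope ring_scope.

(* Scalars: any numeric algebraically closed field C (e.g. the complex numbers
   ℂ = R[i]); Num.conj is complex conjugation, 'i the imaginary unit. *)
Section Qubits.
Variable C : numClosedFieldType.

(* computational-basis configurations of n qubits *)
Definition conf (n : nat) := {ffun 'I_n -> bool}.

(* operators on the Hilbert space with orthonormal basis indexed by T *)
Definition op (T : finType) := 'M[C]_#|T|.
Definition ent (T : finType) (A : op T) (x y : T) : C :=
  A (enum_rank x) (enum_rank y).
Definition mxf (T : finType) (f : T -> T -> C) : op T :=
  \matrix_(i, j) f (enum_val i) (enum_val j).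

Definition adj (p q : nat) (A : 'M[C]_(p, q)) : 'M[C]_(q, p) :=
  (map_mx Num.conj A)^T.

Definition tens (T1 T2 : finType) (A : op T1) (B : op T2) : op (T1 * T2)%type :=
  mxf (fun x y => ent A x.1 y.1 * ent B x.2 y.2).

(* single-qubit Paulis: 0 = I, 1 = X, 2 = Y, 3 = Z; entry <a| sigma |b> *)
Definition sigma (p : 'I_4) (a b : bool) : C :=
  match val p with
  | 0 => (a == b)%:R
  | 1 => (a != b)%:R
  | 2 => if a == b then 0 else if b then - 'i else 'i
  | _ => if a == b then (if a then -1 else 1) else 0
  end.

(* n-qubit Pauli operator  i^c  (s_0 ⊗ ... ⊗ s_{n-1}) *)
Definition pauli (n : nat) (c : 'I_4) (s : 'I_n -> 'I_4) : op (conf n) :=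
  mxf (fun x y : conf n => 'i ^+ c * \prod_(q < n) sigma (s q) (x q) (y q)).
Definition is_pauli (n : nat) (A : op (conf n)) : Prop :=
  exists c s, A = pauli c s.

(* Pauli operator on the encoded space  H_L ⊗ H_J  (k logical, m junk qubits) *)
Definition is_enc_pauli (k m : nat) (A : op (conf k * conf m)%type) : Prop :=
  exists c sL sJ, A = tens (pauli c sL) (pauli (0 : 'I_4) sJ).

(* A is supported on R : A = A_R ⊗ Id_{R^c} *)
Definition supported_on (n : nat) (R : {set 'I_n}) (A : op (conf n)) : Prop :=
  exists g : conf n -> conf n -> C,
    (forall x y x' y' : conf n, (forall q, q \in R -> x q = x' q /\ y q = y' q) ->
       g x y = g x' y') /\
    (forall x y : conf n, ent A x y =
       if [forall q, (q \notin R) ==> (x q == y q)] then g x y else 0).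

Section Code.
Variables n k m : nat.
Let Enc : finType := (conf k * conf m)%type.
Variable V : 'M[C]_(#|conf n|, #|{: Enc}|).

Definition Pi : op (conf n) := V *m adj V.
Definition CSP (A : op (conf n)) : Prop := A *m Pi = Pi *m A.
Definition implements (A : op (conf n)) (B : op Enc) : Prop := adj V *m A *m V = B.
Definition bare_CSP_impl (A : op (conf n)) (AL : op (conf k)) : Prop :=
  CSP A /\ implements A (tens AL 1%:M).

Record stabilizer_subsystem_code (S : op (conf n) -> Prop) : Prop := {
  ssc_pauli : forall s, S s -> is_pauli s;
  ssc_one : S 1%:M;
  ssc_mul : forall s t, S s -> S t -> S (s *m t);
  ssc_abelian : forall s t, S s -> S t -> s *m t = t *m s;
  ssc_noneg : ~ S (- 1%:M);
  ssc_isometry : adj V *m V = 1%:M;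
  ssc_codespace : forall v : 'cV[C]_#|conf n|,
      (exists w, v = V *m w) <-> (forall s, S s -> s *m v = v);
  ssc_basis : forall P, is_pauli P -> CSP P ->
      is_enc_pauli (adj V *m P *m V)
}.

Definition bare_cleanable (R : {set 'I_n}) : Prop :=
  forall AL : op (conf k),
    exists A : op (conf n), supported_on (~: R) A /\ bare_CSP_impl A AL.

End Code.
End Qubits.

From mathcomp Require Import all_boot all_order all_algebra.
Set Implicit Arguments. Unset Strict Implicit. Unset Printing Implicit Defensive.
Import Order.TTheory GRing.Theory Num.Theory.
Local Open Scope ring_scope.

(* The Pauli strings form a basis of all operators on n qubits, and those acting
   trivially outside a region T span the operators supported on T.  Hence a
   bare-CSP operator A supported on R^c implementing P_L ⊗ Id_J is a combination
   of Pauli strings P supported on R^c, and since the Hilbert–Schmidt overlap of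
   V^† A V with P_L ⊗ Id_J is nonzero, some term P has nonzero overlap too.  A
   Pauli string with V^† P V <> 0 commutes with every stabilizer (an
   anticommuting one would give V^† P V = - V^† P V), so it is CSP and, by the
   choice of encoded basis, implements an encoded Pauli, which the overlap forces
   to be a phase times P_L ⊗ Id_J.  Conversely, every logical operator is a
   combination of logical Paulis, and bare-CSP implementations combine linearly. *)

Section Qubits.
Variable C : numClosedFieldType.

Lemma ent_mxf (T : finType) (f : T -> T -> C) x y : ent (mxf f) x y = f x y.
Proof. by rewrite /ent /mxf mxE !enum_rankK. Qed.

Lemma op_ext (T : finType) (A B : op C T) :
  (forall x y, ent A x y = ent B x y) -> A = B.
Proof.
move=> eqAB; apply/matrixP => i j.
by have := eqAB (enum_val i) (enum_val j); rewrite /ent !enum_valK.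
Qed.

Lemma ent_mul (T : finType) (A B : op C T) x y :
  ent (A *m B) x y = \sum_z ent A x z * ent B z y.
Proof.
rewrite /ent mxE (reindex (@enum_rank T)) //.
by apply: onW_bij; exact: enum_rank_bij.
Qed.

Lemma ent_add (T : finType) (A B : op C T) x y :
  ent (A + B) x y = ent A x y + ent B x y.
Proof. by rewrite /ent mxE. Qed.

Lemma ent_scale (T : finType) a (A : op C T) x y : ent (a *: A) x y = a * ent A x y.
Proof. by rewrite /ent mxE. Qed.

Lemma ent_sum (T I : finType) (F : I -> op C T) x y :
  ent (\sum_i F i) x y = \sum_i ent (F i) x y.
Proof. by rewrite /ent summxE. Qed.

Lemma ent0 (T : finType) x y : ent (0 : op C T) x y = 0.
Proof. by rewrite /ent mxE. Qed.

Lemma ent1 (T : finType) x y : ent (1%:M : op C T) x y = (x == y)%:R.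
Proof. by rewrite /ent mxE (inj_eq enum_rank_inj). Qed.

Lemma ent_tens (T1 T2 : finType) (A : op C T1) (B : op C T2) x y :
  ent (tens A B) x y = ent A x.1 y.1 * ent B x.2 y.2.
Proof. by rewrite /tens ent_mxf. Qed.

Lemma tensZl (T1 T2 : finType) a (A : op C T1) (B : op C T2) :
  tens (a *: A) B = a *: tens A B.
Proof. by apply: op_ext => x y; rewrite ent_tens !ent_scale ent_tens mulrA. Qed.

Lemma tens_suml (T1 T2 I : finType) (c : I -> C) (A : I -> op C T1) (B : op C T2) :
  tens (\sum_i c i *: A i) B = \sum_i c i *: tens (A i) B.
Proof.
apply: op_ext => x y; rewrite ent_tens !ent_sum mulr_suml.
by apply: eq_bigr => i _; rewrite !ent_scale ent_tens mulrA.
Qed.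

Lemma adj_mul p q r (A : 'M[C]_(p, q)) (B : 'M[C]_(q, r)) :
  adj (A *m B) = adj B *m adj A.
Proof. by rewrite /adj map_mxM trmx_mul. Qed.

Lemma adjK p q (A : 'M[C]_(p, q)) : adj (adj A) = A.
Proof. by apply/matrixP => i j; rewrite /adj !mxE conjCK. Qed.

Lemma eq_mx_col p q (A B : 'M[C]_(p, q)) : (forall j, col j A = col j B) -> A = B.
Proof.
move=> eq_col; apply/matrixP => i j.
by have := congr1 (fun v : 'cV[C]_p => v i 0) (eq_col j); rewrite !mxE.
Qed.

Lemma col_mulmx p q r (A : 'M[C]_(p, q)) (B : 'M[C]_(q, r)) j :
  col j (A *m B) = A *m col j B.
Proof. by rewrite !colE mulmxA. Qed.

Lemma prodr_nat_bool (I : finType) (P Q : pred I) :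
  \prod_(i | P i) ((Q i)%:R : C) = [forall i, P i ==> Q i]%:R.
Proof.
have [/forallP allPQ | ] := boolP [forall i, P i ==> Q i].
  by rewrite big1 // => i Pi; have := allPQ i; rewrite Pi => /= ->.
rewrite negb_forall => /existsP [i]; rewrite negb_imply => /andP [Pi nQi].
by rewrite (bigD1 i) //= (negbTE nQi) mul0r.
Qed.

Lemma prodr_nat_eq n (x y : conf n) : \prod_q ((x q == y q)%:R : C) = (x == y)%:R.
Proof.
rewrite prodr_nat_bool; congr (_%:R); congr (nat_of_bool _).
apply/forallP/eqP => [eq_xy | -> q //=]; apply/ffunP => q.
exact/eqP/eq_xy.
Qed.

Lemma mulCii : 'i * 'i = -1 :> C. Proof. by rewrite -expr2 sqrCi. Qed.

Lemma conjC_ipow (c : nat) : ('i ^+ c)^* * 'i ^+ c = 1 :> C.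
Proof. by rewrite rmorphXn /= conjCi -exprMn mulNr mulCii opprK expr1n. Qed.

Lemma ipow_mod4 (e : nat) : 'i ^+ e = 'i ^+ (e %% 4) :> C.
Proof.
have i4 : ('i : C) ^+ 4 = 1 by rewrite (_ : 4 = 2 * 2)%N // exprM sqrCi sqrrN expr1n.
by rewrite {1}(divn_eq e 4) exprD mulnC exprM i4 expr1n mul1r.
Qed.

Lemma ipow_divide (c c' : 'I_4) : exists d : 'I_4, 'i ^+ d * 'i ^+ c = 'i ^+ c' :> C.
Proof.
have lt4 : ((c' + 4 - c) %% 4 < 4)%N by rewrite ltn_pmod.
exists (Ordinal lt4); rewrite /= -exprD ipow_mod4 modnDml.
have le_c : (c <= c' + 4)%N by rewrite (leq_trans (ltnW (ltn_ord c))) ?leq_addl.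
by rewrite subnK // modnDr modn_small.
Qed.

Ltac case_pauli p := case: p => [[|[|[|[|?]]]] ?] //.
Ltac simpC := do 3 (rewrite /= ?rmorphN /= ?conjCi ?conjC1
  ?rmorph1 ?conjC0 ?opprK ?mul0r ?mulr0 ?add0r ?addr0 ?mul1r ?mulr1 ?mulrNN
  ?mulNr ?mulrN ?mulCii ?opprK ?oppr0 ?mul0rn ?addrN ?addNr).

Lemma sigma_unitary (p : 'I_4) x y :
  \sum_b (sigma C p b x)^* * sigma C p b y = (x == y)%:R.
Proof. by rewrite big_bool /sigma; case_pauli p; case: x; case: y => /=; simpC. Qed.

(* [pauli_sign p q] is +1 when sigma_p and sigma_q commute and -1 otherwise. *)
Definition pauli_sign (p q : 'I_4) : C :=
  if (val p == 0)%N || (val q == 0)%N || (p == q) then 1 else -1.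

Lemma sigma_commute (p q : 'I_4) x y :
  \sum_b sigma C p x b * sigma C q b y =
  pauli_sign p q * \sum_b sigma C q x b * sigma C p b y.
Proof.
rewrite /pauli_sign !big_bool /sigma.
by case_pauli p; case_pauli q; case: x; case: y => /=; simpC.
Qed.

Lemma sigma_orthogonal (p q : 'I_4) :
  \sum_a \sum_b (sigma C p a b)^* * sigma C q a b = (p == q)%:R *+ 2.
Proof. by rewrite !big_bool /sigma; case_pauli p; case_pauli q => /=; simpC. Qed.

Lemma sigma_complete a b x y :
  \sum_(p < 4) (sigma C p a b)^* * sigma C p x y = ((x == a)%:R * (y == b)%:R) *+ 2.
Proof.
by rewrite !big_ord_recl big_ord0 /sigma; case: a; case: b; case: x; case: y => /=; simpC.
Qed.

Lemma pauliE n c (s : 'I_n -> 'I_4) x y :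
  ent (pauli C c s) x y = 'i ^+ c * \prod_q sigma C (s q) (x q) (y q).
Proof. by rewrite /pauli ent_mxf. Qed.

Lemma pauli_phase n c (s : 'I_n -> 'I_4) : pauli C c s = 'i ^+ c *: pauli C 0 s.
Proof. by apply: op_ext => x y; rewrite ent_scale !pauliE expr0 mul1r. Qed.

Lemma eq_pauli n c (s s' : 'I_n -> 'I_4) : s =1 s' -> pauli C c s = pauli C c s'.
Proof.
move=> eq_s; apply: op_ext => x y; rewrite !pauliE.
by congr (_ * _); apply: eq_bigr => q _; rewrite eq_s.
Qed.

Lemma pauli_id n : pauli C 0 (fun _ : 'I_n => 0) = 1%:M.
Proof.
apply: op_ext => x y; rewrite pauliE ent1 expr0 mul1r -prodr_nat_eq.
by apply: eq_bigr => q _; rewrite /sigma.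
Qed.

Lemma sum_prod_conf n (F : 'I_n -> bool -> C) :
  \sum_(z : conf n) \prod_q F q (z q) = \prod_q \sum_b F q b.
Proof. by rewrite bigA_distr_bigA. Qed.

Lemma pauli_unitary n c (s : 'I_n -> 'I_4) : adj (pauli C c s) *m pauli C c s = 1%:M.
Proof.
apply: op_ext => x y; rewrite ent_mul ent1 -prodr_nat_eq.
rewrite (eq_bigr (fun z => (ent (pauli C c s) z x)^* * ent (pauli C c s) z y));
  last by move=> z _; rewrite /ent /adj !mxE.
under eq_bigr => z _ do rewrite !pauliE rmorphM mulrACA rmorph_prod -big_split /=.
rewrite -mulr_sumr conjC_ipow mul1r.
rewrite (sum_prod_conf (fun q b => (sigma C (s q) b (x q))^* * sigma C (s q) b (y q))).
by apply: eq_bigr => q _; rewrite sigma_unitary.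
Qed.

Lemma pauli_mulE n c c' (s s' : 'I_n -> 'I_4) x y :
  ent (pauli C c s *m pauli C c' s') x y =
  'i ^+ c * 'i ^+ c' * \prod_q \sum_b sigma C (s q) (x q) b * sigma C (s' q) b (y q).
Proof.
rewrite (@ent_mul (conf n)) (eq_bigr (fun z : conf n => 'i ^+ c * 'i ^+ c' *
  \prod_q (sigma C (s q) (x q) (z q) * sigma C (s' q) (z q) (y q)))); last first.
  by move=> z _; rewrite !pauliE mulrACA -big_split.
by rewrite -mulr_sumr (sum_prod_conf (fun q b => sigma C (s q) (x q) b * sigma C (s' q) b (y q))).
Qed.

Lemma pauli_commute n c c' (s s' : 'I_n -> 'I_4) :
  pauli C c s *m pauli C c' s' =
  (\prod_q pauli_sign (s q) (s' q)) *: (pauli C c' s' *m pauli C c s).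
Proof.
apply: op_ext => x y; rewrite ent_scale !pauli_mulE.
rewrite mulrCA [_ ^+ c' * _]mulrC; congr (_ * _).
by rewrite -big_split /=; apply: eq_bigr => q _; exact: sigma_commute.
Qed.

Lemma prod_pauli_sign n (s s' : 'I_n -> 'I_4) :
  \prod_q pauli_sign (s q) (s' q) = 1 \/ \prod_q pauli_sign (s q) (s' q) = -1.
Proof.
apply: (big_ind (fun e : C => e = 1 \/ e = -1)); first by left.
  by move=> a b [->|->] [->|->]; rewrite ?mul1r ?mulr1 ?mulrNN ?mulr1; auto.
by move=> q _; rewrite /pauli_sign; case: ifP; auto.
Qed.

Lemma pauli_supported n (T : {set 'I_n}) c (s : 'I_n -> 'I_4) :
  (forall q, q \notin T -> s q = 0) -> supported_on T (pauli C c s).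
Proof.
move=> s_off_T.
exists (fun x y => 'i ^+ c * \prod_(q in T) sigma C (s q) (x q) (y q)); split.
  move=> x y x' y' eq_on_T; congr (_ * _); apply: eq_bigr => q qT.
  by have [-> ->] := eq_on_T q qT.
move=> x y; rewrite pauliE (bigID (mem T)) /=.
rewrite [X in _ * (_ * X)](eq_bigr (fun q => (x q == y q)%:R)); last first.
  by move=> q qT; rewrite s_off_T.
by rewrite prodr_nat_bool; case: ifP => _; rewrite ?mulr1 ?mulr0.
Qed.

Lemma supported_on_lin n (T : {set 'I_n}) (I : finType) (c : I -> C)
    (F : I -> op C (conf n)) :
  (forall i, supported_on T (F i)) -> supported_on T (\sum_i c i *: F i).
Proof.
move=> suppF; apply: (big_ind (supported_on T)).
- by exists (fun _ _ => 0); split => // x y; rewrite ent0; case: ifP.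
- move=> A B [g [g_loc entA]] [h [h_loc entB]].
  exists (fun x y => g x y + h x y); split.
    by move=> x y x' y' e; rewrite (g_loc _ _ x' y') // (h_loc _ _ x' y').
  by move=> x y; rewrite ent_add entA entB; case: ifP; rewrite ?addr0.
- move=> i _; have [g [g_loc entF]] := suppF i.
  exists (fun x y => c i * g x y); split.
    by move=> x y x' y' e; rewrite (g_loc _ _ x' y').
  by move=> x y; rewrite ent_scale entF; case: ifP; rewrite ?mulr0.
Qed.

Lemma supported_onT n (A : op C (conf n)) : supported_on setT A.
Proof.
exists (ent A); split => [x y x' y' eq_xy | x y].
  have -> : x = x' by apply/ffunP => q; have [] := eq_xy q (in_setT q).
  by have -> : y = y' by apply/ffunP => q; have [] := eq_xy q (in_setT q).
suff -> : [forall q, (q \notin setT) ==> (x q == y q)] by [].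
by apply/forallP => q; rewrite in_setT.
Qed.

(** * Expansion in Pauli strings *)

(* Dual functionals of the expansion: on T the dual basis (sigma_p)^*/2 of the
   single-qubit Paulis; off T, where the operator acts as the identity, the
   functional reading the (0,0) entry into the coefficient of sigma_0 = I. *)
Definition expansion_weight n (T : {set 'I_n}) q (a b : bool) (p : 'I_4) : C :=
  if q \in T then 2^-1 * (sigma C p a b)^*
  else ((a == false) && (b == false) && (val p == 0)%N)%:R.

Definition pauli_coef n (T : {set 'I_n}) (g : conf n -> conf n -> C)
    (s : {ffun 'I_n -> 'I_4}) : C :=
  \sum_a \sum_b g a b * \prod_q expansion_weight T q (a q) (b q) (s q).

Definition restrict n (T : {set 'I_n}) (x : conf n) : conf n :=
  [ffun q => if q \in T then x q else false].

Lemma expansion_weight_sigma n (T : {set 'I_n}) q a b x y :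
  \sum_(p < 4) expansion_weight T q a b p * sigma C p x y =
  (if q \in T then (x == a) && (y == b)
   else (a == false) && (b == false) && (x == y))%:R.
Proof.
rewrite /expansion_weight; case: (q \in T).
  under eq_bigr do rewrite -mulrA.
  rewrite -mulr_sumr sigma_complete -(mulr_natl (_ * _) 2) mulrA mulVf ?pnatr_eq0 //.
  by rewrite mul1r -natrM mulnb.
rewrite big_ord_recl big1 ?addr0; last by move=> i _; rewrite andbF mul0r.
by rewrite andbT /sigma /= -natrM mulnb.
Qed.

Lemma prod_expansion_weight_sigma n (T : {set 'I_n}) (a b x y : conf n) :
  \prod_q \sum_(p < 4) expansion_weight T q (a q) (b q) p * sigma C p (x q) (y q) =
  [&& a == restrict T x, b == restrict T y
    & [forall q, (q \notin T) ==> (x q == y q)]]%:R.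
Proof.
under eq_bigr do rewrite expansion_weight_sigma.
rewrite prodr_nat_bool; congr (_%:R); congr (nat_of_bool _).
apply/forallP/and3P => [coord | [/eqP -> /eqP -> /forallP agree] q]; last first.
  by rewrite !ffunE; have := agree q; case: (q \in T) => /= [_ | ->]; rewrite ?eqxx.
split; last by apply/forallP => q; have := coord q; case: (q \in T) => //= /andP [_ ->].
  apply/eqP/ffunP => q; rewrite ffunE; have := coord q.
  by case: (q \in T) => [/andP [/eqP -> _] | /andP [/andP [/eqP -> _] _]].
apply/eqP/ffunP => q; rewrite ffunE; have := coord q.
by case: (q \in T) => [/andP [_ /eqP ->] | /andP [/andP [_ /eqP ->] _]].
Qed.

Lemma pauli_coef_supp n (T : {set 'I_n}) g s q :
  pauli_coef T g s != 0 -> q \notin T -> s q = 0.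
Proof.
move=> coef_neq0 qT; apply/eqP; apply: contraNT coef_neq0 => sq_neq0.
have sq_val : (val (s q) == 0%N) = false.
  by apply/negbTE; apply: contra sq_neq0 => /eqP sq0; apply/eqP/val_inj.
rewrite /pauli_coef big1 // => a _; rewrite big1 // => b _.
by rewrite (bigD1 q) //= /expansion_weight (negbTE qT) sq_val andbF mul0r mulr0.
Qed.

Lemma ent_pauli_expansion n (T : {set 'I_n}) g x y :
  ent (\sum_s pauli_coef T g s *: pauli C 0 s) x y =
  \sum_a \sum_b g a b *
    \prod_q \sum_(p < 4) expansion_weight T q (a q) (b q) p * sigma C p (x q) (y q).
Proof.
transitivity (\sum_(a : conf n) \sum_(b : conf n) \sum_(s : {ffun 'I_n -> 'I_4})
    g a b * \prod_q expansion_weight T q (a q) (b q) (s q) *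
    \prod_q sigma C (s q) (x q) (y q)); last first.
  apply: eq_bigr => a _; apply: eq_bigr => b _.
  rewrite (bigA_distr_bigA (fun q p =>
    expansion_weight T q (a q) (b q) p * sigma C p (x q) (y q))).
  by rewrite mulr_sumr; apply: eq_bigr => s _; rewrite big_split /= mulrA.
rewrite ent_sum exchange_big /=.
under [RHS]eq_bigr => b _ do rewrite exchange_big /=.
rewrite [RHS]exchange_big /=; apply: eq_bigr => s _.
rewrite ent_scale pauliE expr0 mul1r /pauli_coef mulr_suml.
by rewrite [RHS]exchange_big; apply: eq_bigr => a _; rewrite mulr_suml.
Qed.

Lemma pauli_expansion n (T : {set 'I_n}) (A : op C (conf n)) : supported_on T A ->
  exists c : {ffun 'I_n -> 'I_4} -> C,
    A = \sum_s c s *: pauli C 0 s /\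
    forall s, c s != 0 -> forall q, q \notin T -> s q = 0.
Proof.
case=> g [g_loc entA]; exists (pauli_coef T g); split => [|s]; last first.
  by move=> coef_neq0 q; exact: pauli_coef_supp coef_neq0.
apply: op_ext => x y; rewrite ent_pauli_expansion.
under eq_bigr do under eq_bigr do rewrite prod_expansion_weight_sigma.
rewrite (bigD1 (restrict T x)) //= [X in _ + X]big1 ?addr0; last first.
  by move=> a /negbTE nax; rewrite big1 // => b _; rewrite nax mulr0.
rewrite (bigD1 (restrict T y)) //= [X in _ + X]big1 ?addr0; last first.
  by move=> b /negbTE nby; rewrite nby andbF mulr0.
rewrite !eqxx /= entA (g_loc x y (restrict T x) (restrict T y)); last first.
  by move=> q qT; rewrite !ffunE qT.
by case: ifP; rewrite ?mulr1 ?mulr0.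
Qed.

(** * The Hilbert-Schmidt inner product *)

Definition hsdot (T : finType) (Q X : op C T) : C :=
  \sum_x \sum_y (ent Q x y)^* * ent X x y.

Lemma hsdot0r (T : finType) (Q : op C T) : hsdot Q 0 = 0.
Proof. by rewrite /hsdot big1 // => x _; rewrite big1 // => y _; rewrite ent0 mulr0. Qed.

Lemma hsdot_linr (T I : finType) (Q : op C T) (c : I -> C) (X : I -> op C T) :
  hsdot Q (\sum_i c i *: X i) = \sum_i c i * hsdot Q (X i).
Proof.
rewrite /hsdot.
under eq_bigr => x _ do under eq_bigr => y _ do rewrite ent_sum mulr_sumr.
under [RHS]eq_bigr => i _ do rewrite mulr_sumr.
rewrite [RHS]exchange_big /=; apply: eq_bigr => x _.
under [RHS]eq_bigr => i _ do rewrite mulr_sumr.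
rewrite [RHS]exchange_big /=; apply: eq_bigr => y _.
by apply: eq_bigr => i _; rewrite ent_scale mulrCA.
Qed.

Lemma hsdot_lin_neq0 (T I : finType) (Q : op C T) (c : I -> C) (X : I -> op C T) :
  hsdot Q (\sum_i c i *: X i) != 0 -> exists i, c i != 0 /\ hsdot Q (X i) != 0.
Proof.
rewrite hsdot_linr => sum_neq0.
have /existsP [i term_neq0] : [exists i, c i * hsdot Q (X i) != 0].
  apply: contraNT sum_neq0; rewrite negb_exists => /forallP term0.
  by apply/eqP/big1 => i _; apply/eqP; move: (term0 i); rewrite negbK.
by exists i; apply/andP; rewrite -negb_or -mulf_eq0.
Qed.

Lemma hsdot_tens (T1 T2 : finType) (A A' : op C T1) (B B' : op C T2) :
  hsdot (tens A B) (tens A' B') = hsdot A A' * hsdot B B'.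
Proof.
have sum_pair (F : T1 * T2 -> C) : \sum_x F x = \sum_x1 \sum_x2 F (x1, x2).
  by rewrite pair_bigA; apply: eq_bigr => -[].
rewrite /hsdot sum_pair.
under eq_bigr => x1 _ do under eq_bigr => x2 _ do rewrite sum_pair.
rewrite mulr_suml; apply: eq_bigr => x1 _.
rewrite exchange_big mulr_suml; apply: eq_bigr => y1 _ /=.
rewrite mulr_sumr; apply: eq_bigr => x2 _.
rewrite mulr_sumr; apply: eq_bigr => y2 _.
by rewrite !ent_tens /= rmorphM mulrACA.
Qed.

Lemma hsdot_pauli n c c' (s s' : 'I_n -> 'I_4) :
  hsdot (pauli C c s) (pauli C c' s') =
  ('i ^+ c)^* * 'i ^+ c' * \prod_q ((s q == s' q)%:R *+ 2).
Proof.
rewrite /hsdot (eq_bigr (fun x : conf n => ('i ^+ c)^* * 'i ^+ c' *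
    \sum_(y : conf n) \prod_q ((sigma C (s q) (x q) (y q))^* *
                                sigma C (s' q) (x q) (y q)))); last first.
  move=> x _; rewrite mulr_sumr; apply: eq_bigr => y _.
  by rewrite !pauliE rmorphM rmorph_prod mulrACA -big_split.
rewrite -mulr_sumr; congr (_ * _).
rewrite (eq_bigr (fun x : conf n =>
    \prod_q \sum_b (sigma C (s q) (x q) b)^* * sigma C (s' q) (x q) b)); last first.
  by move=> x _; exact: (sum_prod_conf (fun q b =>
    (sigma C (s q) (x q) b)^* * sigma C (s' q) (x q) b)).
rewrite (sum_prod_conf (fun q a => \sum_b (sigma C (s q) a b)^* * sigma C (s' q) a b)).
by apply: eq_bigr => q _; rewrite sigma_orthogonal.
Qed.

Lemma hsdot_pauli_neq0 n c c' (s s' : 'I_n -> 'I_4) :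
  hsdot (pauli C c s) (pauli C c' s') != 0 -> s =1 s'.
Proof.
rewrite hsdot_pauli => overlap_neq0 q; apply/eqP; apply: contraNT overlap_neq0 => ne.
by rewrite (bigD1 q) //= (negbTE ne) mul0rn mul0r mulr0.
Qed.

Lemma hsdot_pauli_self n c (s : 'I_n -> 'I_4) : hsdot (pauli C c s) (pauli C c s) != 0.
Proof.
rewrite hsdot_pauli conjC_ipow mul1r; apply/prodf_neq0 => q _.
by rewrite eqxx -mulr_natl mulr1 pnatr_eq0.
Qed.

Lemma sandwich_lin p q (I : finType) (c : I -> C) (F : I -> 'M[C]_p)
    (L : 'M[C]_(q, p)) (R : 'M[C]_(p, q)) :
  L *m (\sum_i c i *: F i) *m R = \sum_i c i *: (L *m F i *m R).
Proof.
rewrite mulmx_sumr mulmx_suml; apply: eq_bigr => i _.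
by rewrite -scalemxAr -scalemxAl.
Qed.

(** * Stabilizer codes *)

Section Code.
Variables (n k m : nat) (S : op C (conf n) -> Prop).
Variable V : 'M[C]_(#|conf n|, #|{: conf k * conf m}|).

Lemma CSPZ a (A : op C (conf n)) : CSP V A -> CSP V (a *: A).
Proof. by rewrite /CSP => commA; rewrite -scalemxAl commA scalemxAr. Qed.

Lemma CSP_lin (I : finType) (c : I -> C) (F : I -> op C (conf n)) :
  (forall i, CSP V (F i)) -> CSP V (\sum_i c i *: F i).
Proof.
move=> cspF; rewrite /CSP mulmx_suml mulmx_sumr; apply: eq_bigr => i _.
by rewrite -scalemxAl cspF scalemxAr.
Qed.

Hypothesis code : stabilizer_subsystem_code V S.

Lemma stabilizer_fixV t : S t -> t *m V = V.
Proof.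
move=> St; apply: eq_mx_col => j; rewrite col_mulmx.
have [inV_fixed _] := ssc_codespace code (col j V).
by apply: inV_fixed St; exists (delta_mx j 0); exact: colE.
Qed.

Lemma Pi_fixed p (M : 'M[C]_(#|conf n|, p)) :
  (forall t, S t -> t *m M = M) -> Pi V *m M = M.
Proof.
move=> fixM; apply: eq_mx_col => j; rewrite col_mulmx.
have [_ fixed_inV] := ssc_codespace code (col j M).
have [w ->] : exists w, col j M = V *m w.
  by apply: fixed_inV => t St; rewrite -col_mulmx fixM.
by rewrite /Pi -!mulmxA (mulmxA (adj V)) (ssc_isometry code) mul1mx.
Qed.

Lemma stabilizer_unitary t : S t -> adj t *m t = 1%:M /\ t *m adj t = 1%:M.
Proof.
move=> St; have [c [s ->]] := ssc_pauli code St.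
by have unit_s := pauli_unitary c s; split => //; exact: mulmx1C.
Qed.

Lemma adjV_stabilizer t : S t -> adj V *m t = adj V.
Proof.
move=> St; have [adj_tt _] := stabilizer_unitary St.
have fixV : adj t *m V = V by rewrite -{1}(stabilizer_fixV St) mulmxA adj_tt mul1mx.
by rewrite -[t]adjK -adj_mul fixV.
Qed.

(* If P anticommutes with a stabilizer t, then V^† P V = V^† P t V = - V^† t P V
   = - V^† P V. *)
Lemma stabilizer_commute_of_pauli P :
  is_pauli P -> adj V *m P *m V != 0 -> forall t, S t -> P *m t = t *m P.
Proof.
move=> [c [s ->]] sandwich_neq0 t St; have [c' [s' def_t]] := ssc_pauli code St.
have := pauli_commute c c' s s'; rewrite -def_t.
case: (prod_pauli_sign s s') => -> ; first by rewrite scale1r.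
rewrite scaleN1r => anticomm; exfalso; move/negP: sandwich_neq0; apply.
have : adj V *m pauli C c s *m (t *m V) = adj V *m (pauli C c s *m t) *m V.
  by rewrite !mulmxA.
rewrite (stabilizer_fixV St) anticomm mulmxN mulNmx mulmxA (adjV_stabilizer St).
set X := adj V *m pauli C c s *m V => eqXNX.
have : 2%:R *: X = 0 by rewrite scaler_nat mulr2n {1}eqXNX addNr.
by move/eqP; rewrite scalemx_eq0 pnatr_eq0.
Qed.

Lemma CSP_of_stabilizer_commute A :
  (forall t, S t -> A *m t = t *m A) -> CSP V A.
Proof.
move=> commA.
have commA_adj t : S t -> t *m adj A = adj A *m t.
  move=> St; have [adj_tt tt_adj] := stabilizer_unitary St.
  have := congr1 (@adj C _ _) (commA t St); rewrite !adj_mul => eq_adj.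
  by rewrite -[t *m adj A]mulmx1 -adj_tt mulmxA -(mulmxA t) -eq_adj mulmxA tt_adj mul1mx.
have PiAV : Pi V *m (A *m V) = A *m V.
  by apply: Pi_fixed => t St; rewrite mulmxA -commA // -mulmxA stabilizer_fixV.
have PiAadjV : Pi V *m (adj A *m V) = adj A *m V.
  by apply: Pi_fixed => t St; rewrite mulmxA commA_adj // -mulmxA stabilizer_fixV.
have adjVAPi : adj V *m A *m Pi V = adj V *m A.
  by have := congr1 (@adj C _ _) PiAadjV; rewrite /Pi !adj_mul !adjK !mulmxA.
rewrite /CSP; transitivity (Pi V *m A *m Pi V).
  by rewrite {1}/Pi mulmxA -PiAV !mulmxA.
by rewrite [in RHS]/Pi -[in RHS]mulmxA -adjVAPi !mulmxA.
Qed.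

Lemma bare_CSP_impl_of_overlap cL (sL : 'I_k -> 'I_4) (s : 'I_n -> 'I_4) :
  hsdot (tens (pauli C cL sL) 1%:M) (adj V *m pauli C 0 s *m V) != 0 ->
  exists d, bare_CSP_impl V (pauli C d s) (pauli C cL sL).
Proof.
move=> overlap; have pauli_s : is_pauli (pauli C 0 s) by exists 0, s.
have sandwich_neq0 : adj V *m pauli C 0 s *m V != 0.
  by apply: contraNneq overlap => ->; rewrite hsdot0r.
have csp_s := CSP_of_stabilizer_commute (stabilizer_commute_of_pauli pauli_s sandwich_neq0).
have [c [sL' [sJ encE]]] := ssc_basis code pauli_s csp_s.
move: overlap; rewrite encE -(pauli_id m) hsdot_tens mulf_eq0 negb_or.
case/andP => /hsdot_pauli_neq0 eq_sL /hsdot_pauli_neq0 sJ_id.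
have [d phase_d] := ipow_divide c cL.
exists d; split; first by rewrite pauli_phase; apply: CSPZ.
rewrite /implements pauli_phase -scalemxAr -scalemxAl encE.
rewrite -(eq_pauli c eq_sL) -(eq_pauli 0 sJ_id) pauli_id -tensZl.
by rewrite [pauli C c sL]pauli_phase scalerA phase_d -pauli_phase.
Qed.

Lemma pauli_clean_of_bare_cleanable R : bare_cleanable V R ->
  forall PL, is_pauli PL -> exists P,
    [/\ is_pauli P, supported_on (~: R) P & bare_CSP_impl V P PL].
Proof.
move=> cleanR _ [cL [sL ->]].
have [A [suppA [_ implA]]] := cleanR (pauli C cL sL).
have [cf [defA cf_supp]] := pauli_expansion suppA.
have : hsdot (tens (pauli C cL sL) 1%:M) (adj V *m A *m V) != 0.
  by rewrite implA hsdot_tens -(pauli_id m) mulf_neq0 ?hsdot_pauli_self.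
rewrite defA sandwich_lin => /hsdot_lin_neq0 [s [cs_neq0 overlap]].
have [d implP] := bare_CSP_impl_of_overlap overlap.
exists (pauli C d s); split => //; first by exists d, s.
by apply: pauli_supported => q; apply: cf_supp.
Qed.

Lemma bare_cleanable_of_pauli_clean R :
  (forall PL, is_pauli PL -> exists P,
     [/\ is_pauli P, supported_on (~: R) P & bare_CSP_impl V P PL]) ->
  bare_cleanable V R.
Proof.
move=> cleanP AL.
have [cf [defAL _]] := pauli_expansion (supported_onT AL).
have /fin_all_exists [P cleanPs] : forall s : {ffun 'I_k -> 'I_4}, exists P,
    [/\ is_pauli P, supported_on (~: R) P & bare_CSP_impl V P (pauli C 0 s)].
  by move=> s; apply: cleanP; exists 0, s.
exists (\sum_s cf s *: P s); split.
  by apply: supported_on_lin => s; have [] := cleanPs s.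
split; first by apply: CSP_lin => s; have [_ _ []] := cleanPs s.
rewrite /implements sandwich_lin defAL tens_suml; apply: eq_bigr => s _.
by have [_ _ [_ ->]] := cleanPs s.
Qed.

End Code.

End Qubits.

Theorem lemma10 (C : numClosedFieldType) (n k m : nat)
  (S : op C (conf n) -> Prop)
  (V : 'M[C]_(#|conf n|, #|{: conf k * conf m}|))
  (hk : (0 < k)%N)
  (code : stabilizer_subsystem_code V S)
  (R : {set 'I_n}) :
  bare_cleanable V R <->
  (forall PL : op C (conf k), is_pauli PL ->
     exists P : op C (conf n),
       [/\ is_pauli P, supported_on (~: R) P & bare_CSP_impl V P PL]).
Proof.
split; first exact: (pauli_clean_of_bare_cleanable code (R := R)).
exact: bare_cleanable_of_pauli_clean.
Qed.
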